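(* Let $B_0$ and $B_1$ be boards with $B_0\lessdot B_1$. If $B_0$ has a perfect layout, then $B_1$ also has a perfect layout.
   Context: A board is an $m\times n$ grid of unit cells in which exactly $c$ cells are sinks, one of each of $c$ colors, and all other cells are empty. A layout places, in some of the empty cells, arrows, each having one of the $c$ colors and one of the four cardinal directions. A packet of color $i$ may enter the grid through any unit edge of the outer boundary of the grid, into the adjacent cell, moving perpendicular to that edge into the grid; it moves one cell at a time in its current direction, and whenever it enters a cell containing an arrow of color $i$ its direction becomes that arrow's direction (arrows of other colors are ignored). The packet succeeds if it enters the sink of color $i$; it fails if it enters a sink of another color, leaves the grid, or travels forever without reaching a sink. A perfect layout is a layout in which every packet of every color entering through every boundary edge succeeds. For boards $B_0,B_1$, $B_0\lessdot B_1$ means that $B_0$ is obtained from $B_1$ by deleting a single row or column of $B_1$ that contains no sink. *)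

From mathcomp Require Import all_boot.
Set Implicit Arguments. Unset Strict Implicit. Unset Printing Implicit Defensive.

(* Cells are (row, column) pairs of naturals; row 0 is the top row,
   column 0 the leftmost column.  A cell p is in the m x n grid iff
   p.1 < m and p.2 < n. *)
Definition cell := (nat * nat)%type.

Inductive dir := North | East | South | West.

Definition in_grid (m n : nat) (p : cell) : bool := (p.1 < m) && (p.2 < n).

(* A board with c colors: sink k is the (unique) sink of color k. *)
Definition is_board (m n c : nat) (s : 'I_c -> cell) : Prop :=
  (forall k, in_grid m n (s k)) /\ injective s.

Definition is_sink (c : nat) (s : 'I_c -> cell) (p : cell) : bool :=
  [exists k : 'I_c, s k == p].

(* A layout: each cell holds possibly an arrow (color, direction). *)
Definition layout (c : nat) := cell -> option ('I_c * dir).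

Definition valid_layout (c : nat) (s : 'I_c -> cell) (L : layout c) : Prop :=
  forall k, L (s k) = None.

Definition move (p : cell) (d : dir) : option cell :=
  match d with
  | North => if p.1 is r.+1 then Some (r, p.2) else None
  | South => Some (p.1.+1, p.2)
  | East  => Some (p.1, p.2.+1)
  | West  => if p.2 is q.+1 then Some (p.1, q) else None
  end.

(* A packet state: the cell just entered and the current direction. *)
Definition state := (cell * dir)%type.

(* One step of a packet of color i that has just entered the (non-sink)
   cell st.1 moving in direction st.2: it turns if the cell holds an arrow
   of color i, then moves one cell; None means it leaves the grid. *)
Definition next (m n c : nat) (L : layout c) (i : 'I_c) (st : state)
  : option state :=
  let d' := match L st.1 with
            | Some (j, a) => if j == i then a else st.2
            | None => st.2
            end in
  match move st.1 d' with
  | Some q => if in_grid m n q then Some (q, d') else None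
  | None => None
  end.

(* run t st : the state after t moves, or None if the packet has stopped
   (entered a sink) or left the grid before that. *)
Fixpoint run (m n c : nat) (s : 'I_c -> cell) (L : layout c) (i : 'I_c)
  (t : nat) (st : state) : option state :=
  match t with
  | 0 => Some st
  | t'.+1 =>
      if is_sink s st.1 then None
      else match next m n L i st with
           | Some st' => run m n s L i t' st'
           | None => None
           end
  end.

(* The packet of color i entering with state st succeeds: it eventually
   enters the sink of color i (before entering any other sink / leaving). *)
Definition succeeds (m n c : nat) (s : 'I_c -> cell) (L : layout c)
  (i : 'I_c) (st : state) : Prop :=
  exists t d, run m n s L i t st = Some (s i, d).

(* Entering through a boundary unit edge: the packet enters the adjacent
   boundary cell p moving perpendicularly into the grid. *)
Definition boundary_entry (m n : nat) (p : cell) (d : dir) : bool :=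
  in_grid m n p &&
  match d with
  | East  => p.2 == 0
  | West  => p.2 == n.-1
  | South => p.1 == 0
  | North => p.1 == m.-1
  end.

Definition perfect_layout (m n c : nat) (s : 'I_c -> cell) (L : layout c)
  : Prop :=
  valid_layout s L /\
  forall (i : 'I_c) (p : cell) (d : dir),
    boundary_entry m n p d -> succeeds m n s L i (p, d).

Definition has_perfect_layout (m n c : nat) (s : 'I_c -> cell) : Prop :=
  exists L : layout c, perfect_layout m n s L.

(* B0 <. B1 : B0 (m0 x n0, sinks s0) is obtained from B1 (m1 x n1, sinks s1)
   by deleting a single row r or column q containing no sink. *)
Definition lessdot (m0 n0 c : nat) (s0 : 'I_c -> cell)
  (m1 n1 : nat) (s1 : 'I_c -> cell) : Prop :=
  (n0 = n1 /\ m1 = m0.+1 /\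
   exists2 r, r < m1 &
     forall k, (s1 k).1 != r /\ s0 k = (unbump r (s1 k).1, (s1 k).2))
  \/
  (m0 = m1 /\ n1 = n0.+1 /\
   exists2 q, q < n1 &
     forall k, (s1 k).2 != q /\ s0 k = ((s1 k).1, unbump q (s1 k).2)).

From Pilot Require Import Defs.
From mathcomp Require Import all_boot zify.
Set Implicit Arguments. Unset Strict Implicit. Unset Printing Implicit Defensive.

(* By the symmetry of the grid under transposition (rows <->
   columns, North <-> West, South <-> East) it suffices to treat the
   insertion of a sink-free row r into an m0 x n board B0 with a perfect
   layout L0.  The new row r duplicates a neighbouring old row, its "twin"
   (old row r if r < m0, old row m0-1 if r = m0): the map phi collapsing
   new row r onto the twin and shifting the other rows back identifies B1
   with B0, and the layout L1 on B1 copies L0 through phi, except that a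
   cell of row r lying over a sink of color k receives an arrow of color k
   pointing to that sink.  A packet in B1 then simulates its phi-image in
   B0: each step of the old packet is matched by one step of the new one,
   or by two when it crosses the duplicated pair of rows vertically, and an
   old packet reaching its sink forces the new one into its sink. *)

Definition turn c (L : layout c) (i : 'I_c) (q : cell) (d : dir) : dir :=
  match L q with Some (j, a) => if j == i then a else d | None => d end.

Lemma turn_idem c (L : layout c) i q d :
  turn L i q (turn L i q d) = turn L i q d.
Proof. by rewrite /turn; case: (L q) => [[j a]|] //; case: (j == i). Qed.

Lemma nextE m n c (L : layout c) i q d : Defs.next m n L i (q, d) =
  match move q (turn L i q d) with
  | Some q' => if in_grid m n q' then Some (q', turn L i q d) else None
  | None => None
  end.
Proof. by []. Qed.

Lemma run_add m n c s (L : layout c) i k t st :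
  run m n s L i (k + t) st =
  if run m n s L i k st is Some st' then run m n s L i t st' else None.
Proof.
elim: k st => [|k IH] st //=.
by case: (is_sink s st.1) => //; case: (Defs.next m n L i st).
Qed.

Section RowInsertion.

Variables (m0 n c : nat) (s0 s1 : 'I_c -> cell) (r : nat) (L0 : layout c).
Hypotheses (m0_gt0 : 0 < m0) (r_le_m0 : r <= m0).
Hypothesis s0_inj : injective s0.
Hypothesis s1_s0 :
  forall k, (s1 k).1 != r /\ s0 k = (unbump r (s1 k).1, (s1 k).2).

Definition twin : nat := if r < m0 then r else r.-1.
Definition collapse (x : nat) : nat := if x == r then twin else unbump r x.
Definition phi (p : cell) : cell := (collapse p.1, p.2).

(* The direction from row r towards the other copy of the twin row. *)
Definition toward_twin : dir := if r < m0 then South else North.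

Definition L1 : layout c := fun p =>
  if p.1 == r then
    if [pick k | s0 k == phi p] is Some k then Some (k, toward_twin)
    else L0 (phi p)
  else L0 (phi p).

Ltac collapse_arith :=
  rewrite /collapse /twin /unbump; repeat case: ifP; repeat case: eqP; lia.

Lemma collapse_inj x x' : x != r -> x' != r -> collapse x = collapse x' ->
  x = x'.
Proof. move=> /eqP ? /eqP ?; collapse_arith. Qed.

Lemma collapse_lt_m0 x : (x < m0.+1) = (collapse x < m0).
Proof. apply/idP/idP; collapse_arith. Qed.

Lemma collapse_0 : collapse 0 = 0.
Proof. collapse_arith. Qed.

Lemma collapse_top : collapse m0 = m0.-1.
Proof. collapse_arith. Qed.

(* Moving one row down in B0 is moving one row down in B1, possibly after
   a stutter step inside the duplicated pair of rows. *)
Lemma collapse_south x : (collapse x).+1 < m0 ->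
  collapse x.+1 = (collapse x).+1 \/
  collapse x.+1 = collapse x /\ collapse x.+2 = (collapse x).+1.
Proof. collapse_arith. Qed.

Lemma collapse_north x : 0 < collapse x ->
  0 < x /\
  (collapse x.-1 = (collapse x).-1 \/
   collapse x.-1 = collapse x /\ 0 < x.-1 /\ collapse x.-2 = (collapse x).-1).
Proof. collapse_arith. Qed.

(* The copy of a sink in row r: the other row collapsing onto the twin. *)
Lemma collapse_twin x : x != r -> collapse x = twin ->
  x = if r < m0 then r.+1 else r.-1.
Proof. move=> /eqP ?; collapse_arith. Qed.

Lemma phi_s1 k : phi (s1 k) = s0 k.
Proof. by case: (s1_s0 k) => /negbTE h ->; rewrite /phi /collapse h. Qed.

Lemma phi_inj p q : p.1 != r -> q.1 != r -> phi p = phi q -> p = q.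
Proof.
case: p q => [x y] [x' y'] /= hx hx' [/(collapse_inj hx hx') -> ->].
by [].
Qed.

Lemma grid_phi p : in_grid m0.+1 n p = in_grid m0 n (phi p).
Proof. by rewrite /in_grid /= collapse_lt_m0. Qed.

Lemma sink1_row p : p.1 = r -> is_sink s1 p = false.
Proof.
move=> hp; apply/negbTE/existsP => [[k /eqP hk]].
by case: (s1_s0 k); rewrite hk hp eqxx.
Qed.

Lemma sink1_phi p : is_sink s1 p -> is_sink s0 (phi p).
Proof.
by move=> /existsP [k /eqP <-]; apply/existsP; exists k; rewrite phi_s1.
Qed.

Lemma L1_off_sinks p : ~~ is_sink s0 (phi p) -> L1 p = L0 (phi p).
Proof.
move=> hns; rewrite /L1; case: (p.1 == r) => //.
by case: pickP => // k hk; case/negP: hns; apply/existsP; exists k.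
Qed.

Lemma valid_L1 : valid_layout s0 L0 -> valid_layout s1 L1.
Proof.
move=> hval k; rewrite /L1; case: (s1_s0 k) => /negbTE -> _.
by rewrite phi_s1 hval.
Qed.

Lemma boundary_phi p d :
  boundary_entry m0.+1 n p d -> boundary_entry m0 n (phi p) d.
Proof.
rewrite /boundary_entry grid_phi => /andP [-> hb] /=.
by case: d hb => //= /eqP ->; rewrite ?collapse_top ?collapse_0.
Qed.

Lemma move_collapse p e q0 :
  move (phi p) e = Some q0 -> in_grid m0 n q0 ->
  exists2 q, move p e = Some q &
    phi q = q0 \/
    phi q = phi p /\ exists2 q', move q e = Some q' & phi q' = q0.
Proof.
case: p => x y; case: e => /=.
- case hx: (collapse x) => [|z] //= [<-] _.
  have := @collapse_north x; rewrite hx => /(_ isT) [x_gt0 hnorth] /=.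
  move: x_gt0 hx hnorth; case: x => [|x] //= _ hx.
  case=> [hdirect|[hstut [x_gt0 htwo]]]; exists (x, y) => //.
    by left; rewrite /phi /= hdirect.
  right; split; first by rewrite /phi /= hstut hx.
  exists (x.-1, y); last by rewrite /phi /= htwo.
  by case: x x_gt0 {hx hstut htwo}.
- by move=> [<-] _; exists (x, y.+1); [|left].
- move=> [<-] /andP [/= hsouth _].
  case: (collapse_south hsouth) => [hdirect|[hstut htwo]]; exists (x.+1, y) => //.
    by left; rewrite /phi /= hdirect.
  by right; split; [rewrite /phi /= hstut | exists (x.+2, y); rewrite /phi /= ?htwo].
- by case: y => [|y] //= [<-] _; exists (x, y); [|left].
Qed.

Variable i : 'I_c.
Notation run1 := (run m0.+1 n s1 L1 i).
Notation run0 := (run m0 n s0 L0 i).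

Lemma run1_one p d : ~~ is_sink s0 (phi p) ->
  run1 1 (p, d) =
  if move p (turn L0 i (phi p) d) is Some q then
    if in_grid m0.+1 n q then Some (q, turn L0 i (phi p) d) else None
  else None.
Proof.
move=> hns; rewrite /= nextE /turn L1_off_sinks //.
have -> : is_sink s1 p = false by apply: contraNF hns; apply: sink1_phi.
by case: (move p _) => // q; case: (in_grid _ _ _).
Qed.

Lemma step_sim p d q0 e : in_grid m0.+1 n p -> ~~ is_sink s0 (phi p) ->
  Defs.next m0 n L0 i (phi p, d) = Some (q0, e) ->
  exists k q, run1 k (p, d) = Some (q, e) /\ phi q = q0 /\ in_grid m0.+1 n q.
Proof.
move=> hgp hns; rewrite nextE.
case hmove: (move _ _) => [q0'|] //; case: ifP => // hg [hq0 he].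
rewrite -{}hq0 -{}he in hmove hg *.
have hone := run1_one d hns.
have [q hq [hdirect|[hstut [q' hq' hphi']]]] := move_collapse hmove hg.
- have hgq : in_grid m0.+1 n q by rewrite grid_phi hdirect.
  by exists 1, q; rewrite hone hq hgq.
- have hgq : in_grid m0.+1 n q by rewrite grid_phi hstut -grid_phi.
  have hgq' : in_grid m0.+1 n q' by rewrite grid_phi hphi'.
  exists 2, q'; rewrite (run_add _ _ _ _ _ 1 1) hone hq hgq.
  by rewrite run1_one hstut // turn_idem hq' hgq'.
Qed.

Lemma arrival_sim p d : in_grid m0.+1 n p -> phi p = s0 i ->
  exists t e, run1 t (p, d) = Some (s1 i, e).
Proof.
move=> hg hp; have [/eqP hr|hr] := boolP (p.1 == r); last first.
  exists 0, d; congr (Some (_, _)); apply: phi_inj; rewrite ?phi_s1 //.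
  by case: (s1_s0 i).
have hL : L1 p = Some (i, toward_twin).
  rewrite /L1 hr eqxx; case: pickP => [k /eqP hk|none].
    by rewrite (s0_inj (etrans hk hp)).
  by move: (none i); rewrite hp eqxx.
have hsink : move p toward_twin = Some (s1 i).
  case: p hg hp hr {hL} => x y _ hp /= hx_r; subst x.
  have [hs1r _] := s1_s0 i; move: hp; rewrite -(phi_s1 i).
  case: (s1 i) hs1r => x' y' /= hx' [hcol <-].
  have := collapse_twin hx'; rewrite -hcol /collapse eqxx => /(_ erefl) ->.
  rewrite /toward_twin; case: ltnP => // hrm.
  by have -> : r = r.-1.+1 by lia.
exists 1, toward_twin.
rewrite /= sink1_row // nextE /turn hL eqxx hsink.
by rewrite grid_phi phi_s1 -hp -grid_phi hg.
Qed.

Lemma success_sim t p d e : in_grid m0.+1 n p ->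
  run0 t (phi p, d) = Some (s0 i, e) ->
  exists t' e', run1 t' (p, d) = Some (s1 i, e').
Proof.
elim: t p d => [|t IH] p d hg /=; first by case=> hp _; apply: arrival_sim.
case: ifP => // hns; case hnext: (Defs.next _ _ _ _ _) => [[q0 e0]|] // hrun.
have [k [q [hk [hq hgq]]]] := step_sim hg (negbT hns) hnext.
rewrite -hq in hrun; have [t' [e' ht']] := IH _ _ hgq hrun.
by exists (k + t'), e'; rewrite run_add hk.
Qed.

End RowInsertion.

Lemma row_insertion m0 n c (s0 s1 : 'I_c -> cell) r :
  is_board m0 n s0 -> r <= m0 ->
  (forall k, (s1 k).1 != r /\ s0 k = (unbump r (s1 k).1, (s1 k).2)) ->
  has_perfect_layout m0 n s0 -> has_perfect_layout m0.+1 n s1.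
Proof.
move=> [hin hinj] hr hs [L0 [hval hperf]].
(* A board without rows carries no sink, hence no color at all. *)
have [m0_eq0|m0_gt0] := posnP m0.
  by exists (fun _ => None); split => // i; move: (hin i); rewrite m0_eq0.
exists (L1 m0 s0 r L0); split; first exact: valid_L1.
move=> i p d hb; have [t [e ht]] := hperf i _ _ (boundary_phi m0_gt0 hr hb).
by case/andP: hb => hg _; apply: (success_sim m0_gt0 hr hinj hs hg ht).
Qed.

Definition swapc (p : cell) : cell := (p.2, p.1).
Definition transpose_dir (d : dir) : dir :=
  match d with North => West | West => North | South => East | East => South end.
Definition transpose_layout c (L : layout c) : layout c := fun q =>
  if L (swapc q) is Some (j, a) then Some (j, transpose_dir a) else None.

Lemma swapcK : involutive swapc. Proof. by case. Qed.
Lemma transpose_dirK : involutive transpose_dir. Proof. by case. Qed.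

Lemma move_transpose p d :
  move (swapc p) (transpose_dir d) = omap swapc (move p d).
Proof. by case: p => [[|x] [|y]]; case: d. Qed.

Lemma grid_transpose m n p : in_grid n m (swapc p) = in_grid m n p.
Proof. by rewrite /in_grid andbC. Qed.

Lemma boundary_transpose m n p d :
  boundary_entry n m (swapc p) (transpose_dir d) = boundary_entry m n p d.
Proof. by rewrite /boundary_entry grid_transpose; case: d. Qed.

Lemma turn_transpose c (L : layout c) i q d :
  turn (transpose_layout L) i (swapc q) (transpose_dir d) =
  transpose_dir (turn L i q d).
Proof.
by rewrite /turn /transpose_layout swapcK; case: (L q) => [[j a]|] //; case: eqP.
Qed.

Section Transpose.

Variables (m n c : nat) (s s' : 'I_c -> cell).
Hypothesis s'_s : forall k, s' k = swapc (s k).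

Lemma sink_transpose p : is_sink s' (swapc p) = is_sink s p.
Proof.
apply/existsP/existsP => [[k /eqP hk]|[k /eqP hk]]; exists k; apply/eqP.
  by rewrite -(swapcK (s k)) -(swapcK p) -s'_s hk.
by rewrite s'_s hk.
Qed.

Lemma run_transpose (L : layout c) i t p d :
  run n m s' (transpose_layout L) i t (swapc p, transpose_dir d) =
  omap (fun st => (swapc st.1, transpose_dir st.2)) (run m n s L i t (p, d)).
Proof.
elim: t p d => [|t IH] p d //=; rewrite sink_transpose; case: (is_sink s p) => //.
rewrite !nextE turn_transpose move_transpose; case: (move p _) => [q|] //=.
by rewrite grid_transpose; case: (in_grid m n q).
Qed.

Lemma board_transpose : is_board m n s -> is_board n m s'.
Proof.
move=> [hg hi]; split=> [k|k k' h]; first by rewrite s'_s grid_transpose.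
by apply: hi; rewrite -(swapcK (s k)) -(swapcK (s k')) -!s'_s h.
Qed.

Lemma perfect_transpose : has_perfect_layout m n s -> has_perfect_layout n m s'.
Proof.
move=> [L [hval hperf]]; exists (transpose_layout L); split.
  by move=> k; rewrite /transpose_layout s'_s swapcK hval.
move=> i p d hb.
have hb' : boundary_entry m n (swapc p) (transpose_dir d).
  by rewrite -boundary_transpose swapcK transpose_dirK.
have [t [e ht]] := hperf i _ _ hb'.
exists t, (transpose_dir e).
by rewrite -[p]swapcK -[d]transpose_dirK run_transpose ht /= s'_s.
Qed.

End Transpose.

(* The column case is the row case for the transposed boards. *)
Theorem mainTheorem15 (c m0 n0 m1 n1 : nat) (s0 s1 : 'I_c -> cell) :
  is_board m0 n0 s0 -> is_board m1 n1 s1 ->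
  lessdot m0 n0 s0 m1 n1 s1 ->
  has_perfect_layout m0 n0 s0 -> has_perfect_layout m1 n1 s1.
Proof.
move=> hb0 _ [[<- [-> [r hr hs]]]|[<- [-> [q hq hs]]]] hp.
  exact: (row_insertion hb0 hr hs hp).
pose t0 k := swapc (s0 k); pose t1 k := swapc (s1 k).
have ht : forall k, (t1 k).1 != q /\ t0 k = (unbump q (t1 k).1, (t1 k).2).
  by move=> k; case: (hs k) => hcol hs0; rewrite /t0 hs0.
have hpt1 := row_insertion (board_transpose (fun k => erefl) hb0) hq ht
  (perfect_transpose (fun k => erefl) hp).
by apply: (perfect_transpose _ hpt1) => k; rewrite swapcK.
Qed.
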